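(* Let $\mathcal{F}=\{f_1,\dots,f_M\}$ be a frame of $\mathbb{R}^N$ partitioned into $K$ disjoint pools indexed by $I_1,\dots,I_K$ (disjoint, union $\{1,\dots,M\}$), each of size $|I_k|=L$. Let $P_\infty(x)=\big(\max_{j\in I_k}|\langle x,f_j\rangle|\big)_{k=1}^K$ be the max-pooling operator. Then for all $x,x'\in\mathbb{R}^N$, $$d(x,x')\Big(\min_{s,s'\in\mathcal{S}}A(s,s')\Big)\le\|P_\infty(x)-P_\infty(x')\|_2,$$ where $d(x,x')=\min(\|x-x'\|,\|x+x'\|)$ and, for $s,s'\in\mathcal{S}$ with $\mathcal{J}=\mathcal{J}(s,s')$, $$A(s,s')=\Big\{\min_{\Omega\subseteq\mathcal{J}}\big(\lambda_-^2(\mathcal{F}_{s,\Omega})+\lambda_-^2(\mathcal{F}_{s,\mathcal{J}\setminus\Omega})\big)+\frac{1}{4L}\min_{\Omega\subseteq\mathcal{J}^c}\big(\Lambda_{s,s',\Omega}^2+\Lambda_{s,s',\mathcal{J}^c\setminus\Omega}^2\big)\Big\}^{1/2}.$$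
   Context: Frame bounds: for a finite family $G=\{g_i\}\subset\mathbb{R}^N$, $\lambda_-(G)=\inf_{\|x\|=1}(\sum_i\langle x,g_i\rangle^2)^{1/2}$, $\lambda_+(G)=\sup_{\|x\|=1}(\sum_i\langle x,g_i\rangle^2)^{1/2}$, with $\lambda_-(\emptyset)=0$. Switches: for $x\in\mathbb{R}^N$, $s(x)\in\prod_k I_k$ is given by $s(x)_k=\arg\max_{j\in I_k}|\langle x,f_j\rangle|$, and $\mathcal{S}=\{s(x):x\in\mathbb{R}^N\}$. For $s\in\mathcal{S}$, the cone $\mathcal{C}_s=\bigcap_{k\le K}\bigcap_{j\in I_k}\{x:|\langle x,f_{s_k}\rangle|\ge|\langle x,f_j\rangle|\}$. For $s\in\mathcal{S}$ and $\Omega\subseteq\{1,\dots,K\}$, $\mathcal{F}_{s,\Omega}=(f_{s_k})_{k\in\Omega}$ and $\mathcal{F}_s|_\Omega$ is the linear map $x\mapsto(\langle x,f_{s_k}\rangle)_{k\in\Omega}\in\mathbb{R}^{|\Omega|}$; $\mathcal{F}|_\Omega$ denotes the family $\{f_j: j\in\bigcup_{k\in\Omega}I_k\}$ of all vectors in the pools indexed by $\Omega$. For nonzero vectors $u,v$, $\theta(u,v)=\arccos\big(|\langle u,v\rangle|/(\|u\|\|v\|)\big)$. For $s,s'\in\mathcal{S}$ and $\Omega\subseteq\{1,\dots,K\}$, $\beta(s,s',\Omega)=\min\{\theta(u,v): u\in\mathcal{F}_s|_\Omega(\mathcal{C}_s),\ v\in\mathcal{F}_{s'}|_\Omega(\mathcal{C}_{s'})\}$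 (a modified first principal angle restricted to the images of the cones), and $\Lambda_{s,s',\Omega}=\lambda_-(\mathcal{F}|_\Omega)\sin(\beta(s,s',\Omega))$. Finally $\mathcal{J}(s,s')=\{k: s_k=s'_k\}$ and $\mathcal{J}^c=\{1,\dots,K\}\setminus\mathcal{J}$. *)

From mathcomp Require Import all_boot all_order all_algebra.
From mathcomp Require Import classical_sets boolp reals trigo.
Set Implicit Arguments. Unset Strict Implicit. Unset Printing Implicit Defensive.
Import Order.TTheory GRing.Theory Num.Theory.
Local Open Scope ring_scope.
Local Open Scope classical_set_scope.

Section Defs.
Variables (R : realType) (N M K : nat).

Definition dotv (u v : 'rV[R]_N) : R := \sum_(i < N) u 0 i * v 0 i.
Definition enorm (u : 'rV[R]_N) : R := Num.sqrt (dotv u u).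

Definition lambda_minus (I : finType) (A : {set I}) (g : I -> 'rV[R]_N) : R :=
  inf [set Num.sqrt (\sum_(i in A) (dotv x (g i)) ^+ 2) | x in [set x | enorm x = 1]].

Definition lambda_plus (I : finType) (A : {set I}) (g : I -> 'rV[R]_N) : R :=
  sup [set Num.sqrt (\sum_(i in A) (dotv x (g i)) ^+ 2) | x in [set x | enorm x = 1]].

Definition is_frame (f : 'I_M -> 'rV[R]_N) : Prop :=
  0 < lambda_minus [set: 'I_M]%SET f.

Definition pools_partition (I : 'I_K -> {set 'I_M}) (L : nat) : Prop :=
  (forall k k', k != k' -> #|I k :&: I k'| = 0%N) /\
  (forall j : 'I_M, exists k, j \in I k) /\
  (forall k, #|I k| = L).

Definition Pinf (f : 'I_M -> 'rV[R]_N) (I : 'I_K -> {set 'I_M}) (x : 'rV[R]_N)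
  (k : 'I_K) : R := \big[Num.max/0]_(j in I k) `|dotv x (f j)|.

Definition is_switch_fun (f : 'I_M -> 'rV[R]_N) (I : 'I_K -> {set 'I_M})
  (sw : 'rV[R]_N -> 'I_K -> 'I_M) : Prop :=
  forall x k, sw x k \in I k /\
    (forall j, j \in I k -> `|dotv x (f j)| <= `|dotv x (f (sw x k))|).

Definition switches (sw : 'rV[R]_N -> 'I_K -> 'I_M) : set ('I_K -> 'I_M) :=
  [set sw x | x in [set: 'rV[R]_N]].

Definition cone (f : 'I_M -> 'rV[R]_N) (I : 'I_K -> {set 'I_M})
  (s : 'I_K -> 'I_M) : set 'rV[R]_N :=
  [set x | forall k j, j \in I k -> `|dotv x (f j)| <= `|dotv x (f (s k))|].

(* the map F_s|_Omega, with values in R^{|Omega|} represented as functions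
   on 'I_K whose coordinates outside Omega are ignored *)
Definition Fs_restr (f : 'I_M -> 'rV[R]_N) (s : 'I_K -> 'I_M)
  (x : 'rV[R]_N) : 'I_K -> R := fun k => dotv x (f (s k)).

Definition dotO (O : {set 'I_K}) (u v : 'I_K -> R) : R := \sum_(k in O) u k * v k.
Definition normO (O : {set 'I_K}) (u : 'I_K -> R) : R := Num.sqrt (dotO O u u).

Definition thetaO (O : {set 'I_K}) (u v : 'I_K -> R) : R :=
  acos (`|dotO O u v| / (normO O u * normO O v)).

Definition beta (f : 'I_M -> 'rV[R]_N) (I : 'I_K -> {set 'I_M})
  (s s' : 'I_K -> 'I_M) (O : {set 'I_K}) : R :=
  inf [set thetaO O (Fs_restr f s x) (Fs_restr f s' y) |
       x in [set x | cone f I s x /\ normO O (Fs_restr f s x) != 0] &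
       y in [set y | cone f I s' y /\ normO O (Fs_restr f s' y) != 0]].

Definition pools_of (I : 'I_K -> {set 'I_M}) (O : {set 'I_K}) : {set 'I_M} :=
  \bigcup_(k in O) I k.

Definition Lambda (f : 'I_M -> 'rV[R]_N) (I : 'I_K -> {set 'I_M})
  (s s' : 'I_K -> 'I_M) (O : {set 'I_K}) : R :=
  lambda_minus (pools_of I O) f * sin (beta f I s s' O).

Definition Jset (s s' : 'I_K -> 'I_M) : {set 'I_K} := [set k | s k == s' k]%SET.

Definition lam_s (f : 'I_M -> 'rV[R]_N) (s : 'I_K -> 'I_M) (O : {set 'I_K}) : R :=
  lambda_minus O (fun k => f (s k)).

Definition Acoef (f : 'I_M -> 'rV[R]_N) (I : 'I_K -> {set 'I_M}) (L : nat)
  (s s' : 'I_K -> 'I_M) : R :=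
  let J := Jset s s' in
  Num.sqrt (
    inf [set lam_s f s O ^+ 2 + lam_s f s (J :\: O) ^+ 2 | O in [set O : {set 'I_K} | O \subset J]]
    + (4 * L)%:R^-1 *
      inf [set Lambda f I s s' O ^+ 2 + Lambda f I s s' (~: J :\: O) ^+ 2
           | O in [set O : {set 'I_K} | O \subset ~: J]]).

Definition dpm (x x' : 'rV[R]_N) : R := Num.min (enorm (x - x')) (enorm (x + x')).

End Defs.

From mathcomp Require Import all_boot all_order all_algebra.
From mathcomp Require Import classical_sets boolp reals trigo.
From mathcomp Require Import ring lra.
Set Implicit Arguments. Unset Strict Implicit.
Import Order.TTheory GRing.Theory Num.Theory.
Local Open Scope ring_scope.
Local Open Scope classical_set_scope.

(* Let s, s' be the switches of x, x' and a k = <x, f_{s_k}>, b k = <x', f_{s'_k}>,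
   so the k-th coordinate of P(x) - P(x') is |a k| - |b k|, whose square is
   (a k - b k)^2 or (a k + b k)^2 according to the sign of a k * b k.  On
   J = {k | s_k = s'_k} these are the squares of <x -+ x', f_{s_k}>, and the lower
   frame bound of F_{s,Omega} (Omega a sign class) gives at least d(x,x')^2 lam^2.
   Off J the vectors (a k)_k and (b k)_k lie in the images of the cones C_s and
   C_s', so their angle is at least beta and their squared distance is at least
   sin(beta)^2 times the squared norm of either; since a pool sum is at most L times
   its maximum, that norm dominates the frame bound of F|_Omega applied to x (or x'),
   and d(x,x')^2 <= |x|^2 + |x'|^2 costs the remaining factor. *)

Lemma inf_image_le (R : realType) (T : Type) (F : T -> R) (A : set T) t :
  (forall t, 0 <= F t) -> A t -> inf [set F t | t in A] <= F t.
Proof.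
move=> F_ge0 At; apply: ge_inf; last by exists t.
by exists 0 => _ [u _ <-].
Qed.

Lemma inf_ge0 (R : realType) (A : set R) : (forall r, A r -> 0 <= r) -> 0 <= inf A.
Proof.
move=> A_ge0; have [A_ne|A0] := pselect (A !=set0); first exact: lb_le_inf.
suff -> : A = set0 by rewrite inf0.
by apply/seteqP; split => // r Ar; apply: A0; exists r.
Qed.

Lemma inf_split_le (R : realType) (T : finType) (F : {set T} -> R) (J P : {set T}) :
  (forall O, 0 <= F O) ->
  inf [set F O + F (J :\: O) | O in [set O : {set T} | O \subset J]] <=
  F (J :&: P) + F (J :\: P).
Proof.
move=> F_ge0; have -> : (J :\: P = J :\: (J :&: P))%SET.
  by rewrite finset.setDIr finset.setDv finset.set0U.
by apply: inf_image_le => [O|]; [rewrite addr_ge0 | exact: subsetIl].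
Qed.

Lemma sqr_normB_norm (R : realDomainType) (a b : R) :
  0 <= a * b -> (`|a| - `|b|) ^+ 2 = (a - b) ^+ 2.
Proof. by move=> ab_ge0; rewrite !sqrrB !real_normK ?num_real // -normrM ger0_norm. Qed.

Lemma sqr_normB_norm_lt0 (R : realDomainType) (a b : R) :
  a * b < 0 -> (`|a| - `|b|) ^+ 2 = (a + b) ^+ 2.
Proof.
move=> ab_lt0; rewrite sqrrB sqrrD !real_normK ?num_real // -normrM ltr0_norm //.
by rewrite mulNrn opprK.
Qed.

Lemma sum_sqr_normB_norm (R : realDomainType) (T : finType) (A : {set T}) (a b : T -> R) :
  let P := [set k | 0 <= a k * b k]%SET in
  \sum_(k in A) (`|a k| - `|b k|) ^+ 2 =
  \sum_(k in A :&: P) (a k - b k) ^+ 2 + \sum_(k in A :\: P) (a k + b k) ^+ 2.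
Proof.
move=> P; rewrite (big_setID P); congr (_ + _); apply: eq_bigr => k; rewrite !inE.
  by case/andP=> _; exact: sqr_normB_norm.
by case/andP; rewrite -ltNge => /sqr_normB_norm_lt0.
Qed.

Section EuclideanSpace.
Variables (R : realType) (N : nat).
Implicit Types (x y g : 'rV[R]_N).

Lemma dotvDl x y g : dotv (x + y) g = dotv x g + dotv y g.
Proof. by rewrite /dotv -big_split; apply: eq_bigr => i _; rewrite mxE mulrDl. Qed.

Lemma dotvNl x g : dotv (- x) g = - dotv x g.
Proof. by rewrite /dotv -sumrN; apply: eq_bigr => i _; rewrite mxE mulNr. Qed.

Lemma dotvBl x y g : dotv (x - y) g = dotv x g - dotv y g.
Proof. by rewrite dotvDl dotvNl. Qed.

Lemma dotvZl a x g : dotv (a *: x) g = a * dotv x g.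
Proof. by rewrite /dotv mulr_sumr; apply: eq_bigr => i _; rewrite mxE mulrA. Qed.

Lemma dotvC x y : dotv x y = dotv y x.
Proof. by apply: eq_bigr => i _; rewrite mulrC. Qed.

Lemma dotvDr x y g : dotv g (x + y) = dotv g x + dotv g y.
Proof. by rewrite dotvC dotvDl !(dotvC _ g). Qed.

Lemma dotvNr x g : dotv g (- x) = - dotv g x.
Proof. by rewrite dotvC dotvNl dotvC. Qed.

Lemma dotvv_ge0 x : 0 <= dotv x x.
Proof. by apply: sumr_ge0 => i _; rewrite -expr2 sqr_ge0. Qed.

Lemma enorm_ge0 x : 0 <= enorm x.
Proof. exact: sqrtr_ge0. Qed.

Lemma sqr_enorm x : enorm x ^+ 2 = dotv x x.
Proof. by rewrite sqr_sqrtr // dotvv_ge0. Qed.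

Lemma enorm_parallelogram x y :
  enorm (x - y) ^+ 2 + enorm (x + y) ^+ 2 = 2 * (enorm x ^+ 2 + enorm y ^+ 2).
Proof. by rewrite !sqr_enorm !(dotvDl, dotvNl, dotvDr, dotvNr) (dotvC y x); ring. Qed.

Lemma dpm_ge0 x y : 0 <= dpm x y.
Proof. by rewrite le_min !enorm_ge0. Qed.

Lemma sqr_dpm_le_subr x y : dpm x y ^+ 2 <= enorm (x - y) ^+ 2.
Proof. by rewrite ler_pXn2r ?nnegrE ?dpm_ge0 ?enorm_ge0 // ge_min lexx. Qed.

Lemma sqr_dpm_le_addr x y : dpm x y ^+ 2 <= enorm (x + y) ^+ 2.
Proof. by rewrite ler_pXn2r ?nnegrE ?dpm_ge0 ?enorm_ge0 // ge_min lexx orbT. Qed.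

Lemma sqr_dpm_le_sqr_enormD x y : dpm x y ^+ 2 <= enorm x ^+ 2 + enorm y ^+ 2.
Proof.
have := enorm_parallelogram x y; have := sqr_dpm_le_subr x y.
have := sqr_dpm_le_addr x y; lra.
Qed.

Lemma lambda_minus_ge0 (T : finType) (A : {set T}) (g : T -> 'rV[R]_N) :
  0 <= lambda_minus A g.
Proof. by apply: inf_ge0 => _ [z _ <-]; exact: sqrtr_ge0. Qed.

Lemma lower_frame_ineq (T : finType) (A : {set T}) (g : T -> 'rV[R]_N) y :
  lambda_minus A g ^+ 2 * enorm y ^+ 2 <= \sum_(i in A) dotv y (g i) ^+ 2.
Proof.
have [->|y_neq0] := eqVneq (enorm y) 0.
  by rewrite expr0n mulr0 sumr_ge0 // => i _; exact: sqr_ge0.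
pose z := (enorm y)^-1 *: y.
have z1 : enorm z = 1.
  rewrite /enorm /z dotvZl dotvC dotvZl mulrA -expr2 -sqr_enorm.
  by rewrite exprVn mulVf ?sqrtr1 // expf_neq0.
have Q_ge0 : 0 <= \sum_(i in A) dotv z (g i) ^+ 2 by apply: sumr_ge0 => i _; exact: sqr_ge0.
have lam_le : lambda_minus A g ^+ 2 <= \sum_(i in A) dotv z (g i) ^+ 2.
  rewrite -(sqr_sqrtr Q_ge0) ler_pXn2r ?nnegrE ?lambda_minus_ge0 ?sqrtr_ge0 //.
  apply: ge_inf; last by exists z.
  by exists 0 => _ [w _ <-]; exact: sqrtr_ge0.
have -> : \sum_(i in A) dotv y (g i) ^+ 2 =
          enorm y ^+ 2 * \sum_(i in A) dotv z (g i) ^+ 2.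
  rewrite mulr_sumr; apply: eq_bigr => i _.
  by rewrite dotvZl exprMn mulrA -exprMn mulfV ?expr1n ?mul1r.
by rewrite mulrC ler_wpM2l ?sqr_ge0.
Qed.

End EuclideanSpace.

Section RestrictedInnerProduct.
Variables (R : realType) (K : nat) (O : {set 'I_K}).
Implicit Types (u v : 'I_K -> R).

Definition cosO u v : R := `|dotO O u v| / (normO O u * normO O v).

Lemma dotOC u v : dotO O u v = dotO O v u.
Proof. by apply: eq_bigr => k _; rewrite mulrC. Qed.

Lemma dotOO_ge0 u : 0 <= dotO O u u.
Proof. by apply: sumr_ge0 => k _; rewrite -expr2 sqr_ge0. Qed.

Lemma normO_ge0 u : 0 <= normO O u.
Proof. exact: sqrtr_ge0. Qed.

Lemma sqr_normO u : normO O u ^+ 2 = dotO O u u.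
Proof. by rewrite sqr_sqrtr // dotOO_ge0. Qed.

Lemma dotOO_eq0 u : dotO O u u = 0 -> {in O, forall k, u k = 0}.
Proof.
move=> u0 k kO; have /eqP : u k * u k = 0.
  by apply: (psumr_eq0P _ u0) => // j _; rewrite -expr2 sqr_ge0.
by rewrite mulf_eq0 orbb => /eqP.
Qed.

Lemma normO_eq0 u : (normO O u == 0) = (dotO O u u == 0).
Proof. by rewrite sqrtr_eq0 eq_le dotOO_ge0 andbT. Qed.

Lemma dotO_expand (a b : R) u v :
  \sum_(k in O) (a * u k + b * v k) ^+ 2 =
  a ^+ 2 * dotO O u u + (a * b) *+ 2 * dotO O u v + b ^+ 2 * dotO O v v.
Proof.
rewrite /dotO !mulr_sumr -!big_split /=; apply: eq_bigr => k _.
by rewrite -mulr_natl; ring.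
Qed.

Lemma cauchy_schwarzO u v : dotO O u v ^+ 2 <= dotO O u u * dotO O v v.
Proof.
have [v0|v_neq0] := eqVneq (dotO O v v) 0.
  rewrite v0 mulr0 /dotO big1 ?expr0n // => k kO.
  by rewrite (dotOO_eq0 v0 kO) mulr0.
have v_gt0 : 0 < dotO O v v by rewrite lt_neqAle eq_sym v_neq0 dotOO_ge0.
(* expand 0 <= |V u - W v|^2 with V = |v|^2 and W = <u, v> *)
have := dotO_expand (dotO O v v) (- dotO O u v) u v.
have -> : forall U V W : R, V ^+ 2 * U + V * - W *+ 2 * W + (- W) ^+ 2 * V =
                            V * (U * V - W ^+ 2).
  by move=> U V W; rewrite -mulr_natl; ring.
move=> /(congr1 (Order.le 0)); rewrite sumr_ge0 // => [|k _]; last exact: sqr_ge0.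
by move/esym; rewrite pmulr_rge0 // subr_ge0.
Qed.

Lemma cosO_ge0 u v : 0 <= cosO u v.
Proof. by rewrite divr_ge0 // mulr_ge0 // normO_ge0. Qed.

Lemma cosO_le1 u v : cosO u v <= 1.
Proof.
have [nuv0|nuv] := eqVneq (normO O u * normO O v) 0.
  by rewrite /cosO nuv0 invr0 mulr0.
have nuv_gt0 : 0 < normO O u * normO O v.
  by rewrite lt_neqAle eq_sym nuv mulr_ge0 ?normO_ge0.
rewrite /cosO ler_pdivrMr // mul1r -(@ler_pXn2r _ 2) ?nnegrE ?(ltW nuv_gt0) //.
by rewrite real_normK ?num_real // exprMn !sqr_normO cauchy_schwarzO.
Qed.

Lemma cosOC u v : cosO u v = cosO v u.
Proof. by rewrite /cosO dotOC [normO O u * _]mulrC. Qed.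

Lemma cosO_itv u v : -1 <= cosO u v <= 1.
Proof. by rewrite cosO_le1 andbT (le_trans (lerN10 _) (cosO_ge0 u v)). Qed.

Lemma sqr_cosO_mul_le u v (sg : R) : sg ^+ 2 = 1 ->
  dotO O u u != 0 -> dotO O v v != 0 ->
  (1 - cosO u v ^+ 2) * dotO O u u <= \sum_(k in O) (u k - sg * v k) ^+ 2.
Proof.
move=> sg2 u_neq0 v_neq0.
have u_gt0 : 0 < dotO O u u by rewrite lt_neqAle eq_sym u_neq0 dotOO_ge0.
have v_gt0 : 0 < dotO O v v by rewrite lt_neqAle eq_sym v_neq0 dotOO_ge0.
have -> : cosO u v ^+ 2 = dotO O u v ^+ 2 / (dotO O u u * dotO O v v).
  by rewrite expr_div_n real_normK ?num_real // exprMn !sqr_normO.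
have -> : \sum_(k in O) (u k - sg * v k) ^+ 2 =
          dotO O u u - (sg *+ 2) * dotO O u v + dotO O v v.
  rewrite (eq_bigr (fun k => (1 * u k + - sg * v k) ^+ 2)); last first.
    by move=> k _; rewrite mul1r mulNr.
  by rewrite dotO_expand expr1n sqrrN sg2 !mul1r mulNrn mulNr.
set U := dotO O u u; set V := dotO O v v; set W := dotO O u v.
rewrite -subr_ge0.
(* the difference is a square plus a multiple of 1 - sg^2 = 0 *)
have -> : U - (sg *+ 2) * W + V - (1 - W ^+ 2 / (U * V)) * U =
          (V - sg * W) ^+ 2 / V + (1 - sg ^+ 2) * W ^+ 2 / V.
  by rewrite -mulr_natl; field; rewrite lt0r_neq0 ?lt0r_neq0.
by rewrite sg2 subrr mul0r mul0r addr0 divr_ge0 ?sqr_ge0 ?ltW.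
Qed.

Lemma sum_sqr_sub_signC u v (sg : R) : sg ^+ 2 = 1 ->
  \sum_(k in O) (v k - sg * u k) ^+ 2 = \sum_(k in O) (u k - sg * v k) ^+ 2.
Proof.
move=> sg2; apply: eq_bigr => k _; apply/eqP; rewrite -subr_eq0.
have -> : (v k - sg * u k) ^+ 2 - (u k - sg * v k) ^+ 2 =
          (sg ^+ 2 - 1) * (u k ^+ 2 - v k ^+ 2) by ring.
by rewrite sg2 subrr mul0r.
Qed.

Lemma sum_sqr_sub_sign_l0 u v (sg : R) : sg ^+ 2 = 1 -> dotO O u u = 0 ->
  \sum_(k in O) (u k - sg * v k) ^+ 2 = dotO O v v.
Proof.
move=> sg2 u0; apply: eq_bigr => k kO.
by rewrite (dotOO_eq0 u0 kO) sub0r sqrrN exprMn sg2 mul1r expr2.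
Qed.

Lemma sqr_sin_mul_le (b : R) u v (sg : R) : sg ^+ 2 = 1 ->
  (dotO O u u != 0 -> dotO O v v != 0 -> cosO u v <= cos b) ->
  sin b ^+ 2 * dotO O u u <= \sum_(k in O) (u k - sg * v k) ^+ 2.
Proof.
move=> sg2 cos_ge.
have sin2_le1 : sin b ^+ 2 <= 1 by rewrite sin2cos2 gerBl sqr_ge0.
have [u0|u_neq0] := eqVneq (dotO O u u) 0.
  by rewrite u0 mulr0 sumr_ge0 // => k _; exact: sqr_ge0.
have [v0|v_neq0] := eqVneq (dotO O v v) 0.
  by rewrite -sum_sqr_sub_signC // sum_sqr_sub_sign_l0 // ler_piMl ?dotOO_ge0.
apply: le_trans (sqr_cosO_mul_le sg2 u_neq0 v_neq0); rewrite ler_wpM2r ?dotOO_ge0 //.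
by rewrite sin2cos2 lerB // ler_pXn2r ?nnegrE ?cosO_ge0 ?(le_trans (cosO_ge0 u v)) ?cos_ge.
Qed.

End RestrictedInnerProduct.

Section SwitchCones.
Variables (R : realType) (N M K : nat).
Variables (f : 'I_M -> 'rV[R]_N) (I : 'I_K -> {set 'I_M}).

Lemma thetaO_ge0 (O : {set 'I_K}) (u v : 'I_K -> R) : 0 <= thetaO O u v.
Proof. exact/acos_ge0/cosO_itv. Qed.

Lemma beta_ge0 s s' O : 0 <= beta f I s s' O.
Proof. by apply: inf_ge0 => _ [x _ [y _ <-]]; exact: thetaO_ge0. Qed.

Lemma cosO_le_cos_beta s s' O x y : cone f I s x -> cone f I s' y ->
  dotO O (Fs_restr f s x) (Fs_restr f s x) != 0 ->
  dotO O (Fs_restr f s' y) (Fs_restr f s' y) != 0 ->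
  cosO O (Fs_restr f s x) (Fs_restr f s' y) <= cos (beta f I s s' O).
Proof.
move=> sx s'y x_neq0 y_neq0.
set t := cosO _ _ _; set b := beta _ _ _ _ _.
have b_le : b <= acos t.
  apply: ge_inf; first by exists 0 => _ [x1 _ [y1 _ <-]]; exact: thetaO_ge0.
  by exists x; [split; rewrite ?normO_eq0 | exists y; [split; rewrite ?normO_eq0 |]].
have acos_pi : acos t \in `[0, pi]%R by rewrite in_itv /= acos_ge0 ?acos_lepi ?cosO_itv.
have b_pi : b \in `[0, pi]%R.
  by rewrite in_itv /= beta_ge0 (le_trans b_le) ?acos_lepi ?cosO_itv.
by rewrite -[X in X <= _]acosK ?in_itv ?cosO_itv // leNgt ltr_cos // -leNgt.
Qed.

Lemma sqr_sin_beta_mul_le s s' (O : {set 'I_K}) x y (sg : R) :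
  cone f I s x -> cone f I s' y -> sg ^+ 2 = 1 ->
  let S := \sum_(k in O) (dotv x (f (s k)) - sg * dotv y (f (s' k))) ^+ 2 in
  sin (beta f I s s' O) ^+ 2 * dotO O (Fs_restr f s x) (Fs_restr f s x) <= S /\
  sin (beta f I s s' O) ^+ 2 * dotO O (Fs_restr f s' y) (Fs_restr f s' y) <= S.
Proof.
move=> sx s'y sg2 S; split.
  by apply: sqr_sin_mul_le => // ? ?; exact: cosO_le_cos_beta.
rewrite /S -(sum_sqr_sub_signC _ _ _ sg2).
by apply: sqr_sin_mul_le => // ? ?; rewrite cosOC; exact: cosO_le_cos_beta.
Qed.

End SwitchCones.

Section Pools.
Variables (R : realType) (N M K L : nat).
Variables (f : 'I_M -> 'rV[R]_N) (I : 'I_K -> {set 'I_M}).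
Hypothesis I_partition : pools_partition I L.

Lemma sum_pools_of (E : 'I_M -> R) O :
  \sum_(j in pools_of I O) E j = \sum_(k in O) \sum_(j in I k) E j.
Proof.
have [I_disj _] := I_partition.
pose IO k := if k \in O then I k else finset.set0.
have -> : pools_of I O = (\bigcup_k IO k)%SET by rewrite /pools_of big_mkcond.
rewrite partition_disjoint_bigcup; last first.
  move=> k k' kk'; rewrite /IO -setI_eq0.
  by case: (k \in O); case: (k' \in O); rewrite ?finset.set0I ?finset.setI0 // -cards_eq0 I_disj.
rewrite [RHS]big_mkcond; apply: eq_bigr => k _; rewrite /IO.
by case: (k \in O); rewrite ?big_set0.
Qed.

Lemma pools_frame_ineq s O z : cone f I s z ->
  lambda_minus (pools_of I O) f ^+ 2 * enorm z ^+ 2 <=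
  L%:R * dotO O (Fs_restr f s z) (Fs_restr f s z).
Proof.
move=> sz; apply: le_trans (lower_frame_ineq _ _ z) _.
rewrite sum_pools_of /dotO mulr_sumr; apply: ler_sum => k _.
have [_ [_ I_card]] := I_partition.
rewrite -expr2 mulr_natl -(I_card k) -sumr_const; apply: ler_sum => j jk.
rewrite -[X in X <= _]real_normK ?num_real // -[X in _ <= X]real_normK ?num_real //.
by rewrite ler_pXn2r ?nnegrE // sz.
Qed.

Lemma sqr_dpm_Lambda_le s s' O x x' (sg : R) :
  cone f I s x -> cone f I s' x' -> sg ^+ 2 = 1 ->
  dpm x x' ^+ 2 * ((4 * L)%:R^-1 * Lambda f I s s' O ^+ 2) <=
  \sum_(k in O) (dotv x (f (s k)) - sg * dotv x' (f (s' k))) ^+ 2.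
Proof.
move=> sx s'x' sg2; set S := (X in _ <= X).
have S_ge0 : 0 <= S by apply: sumr_ge0 => k _; exact: sqr_ge0.
have [->|L_neq0] := eqVneq L 0%N; first by rewrite muln0 invr0 mul0r mulr0.
have L_gt0 : 0 < L%:R :> R by rewrite ltr0n lt0n.
have [sinU sinV] := sqr_sin_beta_mul_le O sx s'x' sg2; rewrite -/S in sinU sinV.
have lamU := pools_frame_ineq O sx; have lamV := pools_frame_ineq O s'x'.
have d_le := sqr_dpm_le_sqr_enormD x x'.
rewrite /Lambda exprMn natrM mulrCA mulrC ler_pdivrMr ?mulr_gt0 //.
have sin_ge0 := sqr_ge0 (sin (beta f I s s' O)).
have lam_ge0 := sqr_ge0 (lambda_minus (pools_of I O) f).
(* d^2 lam^2 sin^2 <= (|x|^2 + |x'|^2) lam^2 sin^2 <= L sin^2 (|F_s x|^2 + |F_s' x'|^2) <= 2 L S *)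
have := ler_wpM2r (mulr_ge0 lam_ge0 sin_ge0) d_le.
have := ler_wpM2r sin_ge0 lamU; have := ler_wpM2r sin_ge0 lamV.
have := ler_wpM2l (ltW L_gt0) sinU; have := ler_wpM2l (ltW L_gt0) sinV.
have := mulr_ge0 (ltW L_gt0) S_ge0.
move=> *; lra.
Qed.

End Pools.

Section MaxPooling.
Variables (R : realType) (N M K L : nat).
Variables (f : 'I_M -> 'rV[R]_N) (I : 'I_K -> {set 'I_M}).

Lemma Pinf_switch sw z k : is_switch_fun f I sw ->
  Pinf f I z k = `|dotv z (f (sw z k))|.
Proof.
move=> sw_switch; have [swk sw_max] := sw_switch z k.
apply/le_anti/andP; split; first by apply/bigmax_leP; split => // j /sw_max.
exact: (le_bigmax_cond _ _ swk).
Qed.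

Lemma switch_cone sw z : is_switch_fun f I sw -> cone f I (sw z) z.
Proof. by move=> sw_switch k j; exact: (sw_switch z k).2. Qed.

Lemma lam_s_frame_ineq (s : 'I_K -> 'I_M) (O : {set 'I_K}) y (d : R) : d <= enorm y ^+ 2 ->
  d * lam_s f s O ^+ 2 <= \sum_(k in O) dotv y (f (s k)) ^+ 2.
Proof.
move=> d_le; apply: le_trans (lower_frame_ineq _ _ y).
by rewrite mulrC ler_wpM2l ?sqr_ge0.
Qed.

Lemma sqr_dpm_inf_lam_s_le s s' x x' :
  dpm x x' ^+ 2 *
    inf [set lam_s f s O ^+ 2 + lam_s f s (Jset s s' :\: O) ^+ 2
        | O in [set O : {set 'I_K} | O \subset Jset s s']] <=
  \sum_(k in Jset s s') (`|dotv x (f (s k))| - `|dotv x' (f (s' k))|) ^+ 2.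
Proof.
set J := Jset s s'; rewrite sum_sqr_normB_norm; set P := finset _.
have s'E k : k \in J -> s' k = s k by rewrite inE => /eqP.
have inf_le := inf_split_le (F := fun O => lam_s f s O ^+ 2) J P (fun O => sqr_ge0 _).
apply: le_trans (ler_wpM2l (sqr_ge0 _) inf_le) _; rewrite mulrDr lerD //.
- rewrite (eq_bigr (fun k => dotv (x - x') (f (s k)) ^+ 2)) => [|k].
    exact/lam_s_frame_ineq/sqr_dpm_le_subr.
  by rewrite inE => /andP[/s'E-> _]; rewrite dotvBl.
- rewrite (eq_bigr (fun k => dotv (x + x') (f (s k)) ^+ 2)) => [|k].
    exact/lam_s_frame_ineq/sqr_dpm_le_addr.
  by rewrite inE => /andP[_ /s'E->]; rewrite dotvDl.
Qed.

Lemma sqr_dpm_inf_Lambda_le s s' x x' :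
  pools_partition I L -> cone f I s x -> cone f I s' x' ->
  dpm x x' ^+ 2 * ((4 * L)%:R^-1 *
    inf [set Lambda f I s s' O ^+ 2 + Lambda f I s s' (~: Jset s s' :\: O) ^+ 2
        | O in [set O : {set 'I_K} | O \subset ~: Jset s s']]) <=
  \sum_(k in ~: Jset s s') (`|dotv x (f (s k))| - `|dotv x' (f (s' k))|) ^+ 2.
Proof.
move=> I_partition sx s'x'.
set J := (~: Jset s s')%SET; rewrite sum_sqr_normB_norm; set P := finset _.
have inf_le :=
  inf_split_le (F := fun O => Lambda f I s s' O ^+ 2) J P (fun O => sqr_ge0 _).
have c_ge0 : 0 <= (4 * L)%:R^-1 :> R by rewrite invr_ge0.
apply: le_trans (ler_wpM2l (sqr_ge0 _) (ler_wpM2l c_ge0 inf_le)) _.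
rewrite !mulrDr lerD //.
- have -> : \sum_(k in J :&: P) (dotv x (f (s k)) - dotv x' (f (s' k))) ^+ 2 =
            \sum_(k in J :&: P) (dotv x (f (s k)) - 1 * dotv x' (f (s' k))) ^+ 2.
    by apply: eq_bigr => k _; rewrite mul1r.
  exact: sqr_dpm_Lambda_le (expr1n _ 2).
- have -> : \sum_(k in J :\: P) (dotv x (f (s k)) + dotv x' (f (s' k))) ^+ 2 =
            \sum_(k in J :\: P) (dotv x (f (s k)) - (-1) * dotv x' (f (s' k))) ^+ 2.
    by apply: eq_bigr => k _; rewrite mulN1r opprK.
  by apply: sqr_dpm_Lambda_le; rewrite ?sqrrN ?expr1n.
Qed.

Lemma sqr_dpm_Acoef_le s s' x x' :
  pools_partition I L -> cone f I s x -> cone f I s' x' ->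
  dpm x x' ^+ 2 * Acoef f I L s s' ^+ 2 <=
  \sum_(k < K) (`|dotv x (f (s k))| - `|dotv x' (f (s' k))|) ^+ 2.
Proof.
move=> I_partition sx s'x'.
rewrite /Acoef sqr_sqrtr; last first.
  by rewrite addr_ge0 ?mulr_ge0 ?invr_ge0 // inf_ge0 // => _ [O _ <-];
     rewrite addr_ge0 ?sqr_ge0.
rewrite mulrDr (bigID (fun k => k \in Jset s s')) lerD ?sqr_dpm_inf_lam_s_le //=.
rewrite (eq_bigl (fun k => k \in ~: Jset s s')) => [|k]; last by rewrite finset.in_setC.
exact: sqr_dpm_inf_Lambda_le.
Qed.

End MaxPooling.

Theorem proposition4 (R : realType) (N M K L : nat)
  (f : 'I_M -> 'rV[R]_N) (I : 'I_K -> {set 'I_M})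
  (sw : 'rV[R]_N -> 'I_K -> 'I_M) :
  is_frame f -> pools_partition I L -> is_switch_fun f I sw ->
  forall x x' : 'rV[R]_N,
    dpm x x' * inf [set Acoef f I L s s' | s in switches sw & s' in switches sw]
    <= Num.sqrt (\sum_(k < K) (Pinf f I x k - Pinf f I x' k) ^+ 2).
Proof.
(* The frame property only makes the constant positive; the bound holds without it. *)
move=> _ I_partition sw_switch x x'.
have inf_le : inf [set Acoef f I L s s' | s in switches sw & s' in switches sw]
              <= Acoef f I L (sw x) (sw x').
  apply: ge_inf; first by exists 0 => _ [s _ [s' _ <-]]; exact: sqrtr_ge0.
  by exists (sw x); [exists x | exists (sw x'); [exists x' |]].
apply: le_trans (ler_wpM2l (dpm_ge0 x x') inf_le) _.
rewrite -(@ler_pXn2r _ 2) ?nnegrE ?mulr_ge0 ?dpm_ge0 ?sqrtr_ge0 //.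
rewrite sqr_sqrtr ?sumr_ge0 // => [|k _]; last exact: sqr_ge0.
under eq_bigr do rewrite !(Pinf_switch _ _ sw_switch).
rewrite exprMn.
apply: sqr_dpm_Acoef_le => //; exact: switch_cone.
Qed.
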